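(* Let $\mathbb X,\mathbb Y$ be Euclidean spaces, $\Phi\colon\mathbb X\rightrightarrows\mathbb Y$ with closed graph, $(\bar x,\bar y)\in\operatorname{gph}\Phi$ and $u\in\mathbb S_{\mathbb X}$. Each of the following three properties remains equivalent to itself when, in its definition, the requirement $x_k^*\in\widehat D^*\Phi(x_k,y_k)(\lambda_k)$ is replaced by $x_k^*\in D^*\Phi(x_k,y_k)(\lambda_k)$: (a) asymptotic regularity of $\Phi$ at $(\bar x,\bar y)$: for all sequences $(x_k,y_k)\in\operatorname{gph}\Phi$, $x_k^*$, $\lambda_k$ and $x^*$ with $x_k\to\bar x$, $y_k\to\bar y$, $x_k^*\to x^*$ and $x_k^*\in\widehat D^*\Phi(x_k,y_k)(\lambda_k)$ for all $k$, one has $x^*\in\operatorname{Im}D^*\Phi(\bar x,\bar y)$; (b) asymptotic regularity of $\Phi$ at $(\bar x,\bar y)$ in direction $u$: for all sequences $(x_k,y_k)\in\operatorname{gph}\Phi$, $x_k^*\in\mathbb X$, $\lambda_k\in\mathbb Y$ and $x^*\in\mathbb X$, $y^*\in\mathbb Y$ with $x_k\notin\Phi^{-1}(\bar y)$, $y_k\ne\bar y$, $x_k^*\in\widehat D^*\Phi(x_k,y_k)(\lambda_k)$ for all $k$ and the convergences (C): $x_k\to\bar x$, $y_k\to\bar y$, $x_k^*\to x^*$, $\frac{x_k-\bar x}{\|x_k-\bar x\|}\to u$, $\frac{y_k-\bar y}{\|x_k-\bar x\|}\to0$, $\frac{\|y_k-\bar y\|}{\|x_k-\bar x\|}\lambda_k\to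 y^*$, $\|\lambda_k\|\to\infty$, $\frac{y_k-\bar y}{\|y_k-\bar y\|}-\frac{\lambda_k}{\|\lambda_k\|}\to0$, one has $x^*\in\operatorname{Im}D^*\Phi(\bar x,\bar y)$; (c) strong asymptotic regularity of $\Phi$ at $(\bar x,\bar y)$ in direction $u$: the same as (b) but with conclusion $x^*\in\operatorname{Im}D^*\Phi((\bar x,\bar y);(u,0))$.
   Context: $\widehat D^*\Phi(x,y)(y^* )=\{x^*\mid(x^*,-y^* )\in\widehat{\mathcal N}_{\operatorname{gph}\Phi}(x,y)\}$ (regular coderivative), $D^*\Phi(x,y)(y^* )$ likewise with the limiting normal cone $\mathcal N$, and $D^*\Phi((\bar x,\bar y);(u,v))(y^* )=\{x^*\mid(x^*,-y^* )\in\mathcal N_{\operatorname{gph}\Phi}((\bar x,\bar y);(u,v))\}$ with the directional limiting normal cone $\mathcal N_Q(z;w)$ = set of $\eta$ with $w_k\to w$, $t_k\downarrow0$, $\eta_k\to\eta$, $\eta_k\in\widehat{\mathcal N}_Q(z+t_kw_k)$. $\operatorname{Im}\Psi:=\bigcup_{y^*}\Psi(y^* )$. *)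

(* Euclidean spaces X = R^n, Y = R^m realised as
   row vectors 'rV[R]_n with the standard inner product and Euclidean norm. *)
From HB Require Import structures.
From mathcomp Require Import all_boot all_order all_algebra.
From mathcomp Require Import all_classical all_reals all_analysis.
Set Implicit Arguments. Unset Strict Implicit. Unset Printing Implicit Defensive.
Import Order.TTheory GRing.Theory Num.Theory.
Import numFieldNormedType.Exports.
Local Open Scope classical_set_scope.
Local Open Scope ring_scope.

Section Defs.
Variable R : realType.

Definition dotv {n} (a b : 'rV[R]_n) : R := \sum_(i < n) a 0 i * b 0 i.
Definition enorm {n} (a : 'rV[R]_n) : R := Num.sqrt (dotv a a).

Definition pdot {n m} (a b : 'rV[R]_n * 'rV[R]_m) : R := dotv a.1 b.1 + dotv a.2 b.2.
Definition pnorm {n m} (a : 'rV[R]_n * 'rV[R]_m) : R := Num.sqrt (pdot a a).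
Definition psub {n m} (a b : 'rV[R]_n * 'rV[R]_m) : 'rV[R]_n * 'rV[R]_m :=
  (a.1 - b.1, a.2 - b.2).

Definition gph {n m} (Phi : 'rV[R]_n -> set 'rV[R]_m) : set ('rV[R]_n * 'rV[R]_m) :=
  [set z | Phi z.1 z.2].

(* regular (Frechet) normal cone; empty outside Q *)
Definition rnormal {n m} (Q : set ('rV[R]_n * 'rV[R]_m)) (z eta : 'rV[R]_n * 'rV[R]_m)
  : Prop :=
  Q z /\ forall e : R, 0 < e -> exists2 d : R, 0 < d &
    forall z', Q z' -> pnorm (psub z' z) < d ->
      pdot eta (psub z' z) <= e * pnorm (psub z' z).

Definition lnormal {n m} (Q : set ('rV[R]_n * 'rV[R]_m)) (z eta : 'rV[R]_n * 'rV[R]_m)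
  : Prop :=
  exists (zk etak : nat -> 'rV[R]_n * 'rV[R]_m),
    [/\ (forall k, rnormal Q (zk k) (etak k)), zk @ \oo --> z & etak @ \oo --> eta].

Definition dnormal {n m} (Q : set ('rV[R]_n * 'rV[R]_m))
  (z w eta : 'rV[R]_n * 'rV[R]_m) : Prop :=
  exists (wk etak : nat -> 'rV[R]_n * 'rV[R]_m) (tk : nat -> R),
    [/\ wk @ \oo --> w, (forall k, 0 < tk k), tk @ \oo --> (0 : R),
        etak @ \oo --> eta &
        forall k, rnormal Q (z.1 + tk k *: (wk k).1, z.2 + tk k *: (wk k).2) (etak k)].

(* coderivatives: Dstar Phi x y ystar xstar  means  xstar \in D*Phi(x,y)(ystar) *)
Definition rcoder {n m} (Phi : 'rV[R]_n -> set 'rV[R]_m) (x : 'rV[R]_n) (y ystar : 'rV[R]_m)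
  : set 'rV[R]_n := [set xs | rnormal (gph Phi) (x, y) (xs, - ystar)].
Definition lcoder {n m} (Phi : 'rV[R]_n -> set 'rV[R]_m) (x : 'rV[R]_n) (y ystar : 'rV[R]_m)
  : set 'rV[R]_n := [set xs | lnormal (gph Phi) (x, y) (xs, - ystar)].
Definition dcoder {n m} (Phi : 'rV[R]_n -> set 'rV[R]_m) (x : 'rV[R]_n) (y : 'rV[R]_m)
  (u : 'rV[R]_n) (v ystar : 'rV[R]_m) : set 'rV[R]_n :=
  [set xs | dnormal (gph Phi) (x, y) (u, v) (xs, - ystar)].

Definition Im {n m} (Psi : 'rV[R]_m -> set 'rV[R]_n) : set 'rV[R]_n :=
  [set xs | exists ys, Psi ys xs].

Definition coderType n m := 'rV[R]_n -> 'rV[R]_m -> 'rV[R]_m -> set 'rV[R]_n.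

(* (a) asymptotic regularity, with the coderivative used along the
   sequence as parameter D *)
Definition asym_reg {n m} (D : coderType n m) (Phi : 'rV[R]_n -> set 'rV[R]_m)
  (xb : 'rV[R]_n) (yb : 'rV[R]_m) : Prop :=
  forall (xk : nat -> 'rV[R]_n) (yk : nat -> 'rV[R]_m) (xsk : nat -> 'rV[R]_n)
         (lamk : nat -> 'rV[R]_m) (xs : 'rV[R]_n),
    (forall k, gph Phi (xk k, yk k)) ->
    xk @ \oo --> xb -> yk @ \oo --> yb -> xsk @ \oo --> xs ->
    (forall k, D (xk k) (yk k) (lamk k) (xsk k)) ->
    Im (lcoder Phi xb yb) xs.

(* the hypotheses of (b)/(c), with conclusion set T *)
Definition dir_asym_prop {n m} (D : coderType n m) (Phi : 'rV[R]_n -> set 'rV[R]_m)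
  (xb : 'rV[R]_n) (yb : 'rV[R]_m) (u : 'rV[R]_n) (T : set 'rV[R]_n) : Prop :=
  forall (xk : nat -> 'rV[R]_n) (yk : nat -> 'rV[R]_m) (xsk : nat -> 'rV[R]_n)
         (lamk : nat -> 'rV[R]_m) (xs : 'rV[R]_n) (ys : 'rV[R]_m),
    (forall k, gph Phi (xk k, yk k)) ->
    (forall k, ~ Phi (xk k) yb) ->
    (forall k, yk k != yb) ->
    (forall k, D (xk k) (yk k) (lamk k) (xsk k)) ->
    xk @ \oo --> xb -> yk @ \oo --> yb -> xsk @ \oo --> xs ->
    (fun k => (enorm (xk k - xb))^-1 *: (xk k - xb)) @ \oo --> u ->
    (fun k => (enorm (xk k - xb))^-1 *: (yk k - yb)) @ \oo --> (0 : 'rV[R]_m) ->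
    (fun k => (enorm (yk k - yb) / enorm (xk k - xb)) *: lamk k) @ \oo --> ys ->
    (fun k => enorm (lamk k)) @ \oo --> +oo ->
    (fun k => (enorm (yk k - yb))^-1 *: (yk k - yb) - (enorm (lamk k))^-1 *: lamk k)
      @ \oo --> (0 : 'rV[R]_m) ->
    T xs.

Definition dir_asym_reg {n m} (D : coderType n m) (Phi : 'rV[R]_n -> set 'rV[R]_m)
  (xb : 'rV[R]_n) (yb : 'rV[R]_m) (u : 'rV[R]_n) : Prop :=
  dir_asym_prop D Phi xb yb u (Im (lcoder Phi xb yb)).

Definition strong_dir_asym_reg {n m} (D : coderType n m) (Phi : 'rV[R]_n -> set 'rV[R]_m)
  (xb : 'rV[R]_n) (yb : 'rV[R]_m) (u : 'rV[R]_n) : Prop :=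
  dir_asym_prop D Phi xb yb u (Im (dcoder Phi xb yb u 0)).

End Defs.

(* Regular normals are limiting normals, so replacing D^*Phi by its regular
   counterpart along the sequences only weakens the hypotheses.  Conversely,
   each limiting-coderivative tuple p_k = (x_k, y_k, x*_k, lam_k) is a limit of
   regular-coderivative tuples, so we may pick a regular one q_k within
   1/(k+1) of p_k.  Doing so also inside the open set {x notin Phi^-1(yb),
   y <> yb} (open because gph Phi is closed) and so that the normalised
   quantities of (C) -- continuous at p_k since x_k <> xb, y_k <> yb and
   lam_k <> 0 eventually -- move by less than 1/(k+1), the sequence q_k
   satisfies the same hypotheses with the same limits x* and y*. *)

From mathcomp Require Import all_boot all_order all_algebra.
From mathcomp Require Import all_classical all_reals all_analysis.
From mathcomp Require Import lra.
Import Order.TTheory GRing.Theory Num.Theory.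
Import numFieldNormedType.Exports.
Local Open Scope classical_set_scope.
Local Open Scope ring_scope.

Section NormedSequences.
Context {R : realType}.

Lemma cvg_fst_comp {A B : topologicalType} {T} {F : set_system T}
    {f : T -> A * B} {a : A * B} :
  f @ F --> a -> (fun t => (f t).1) @ F --> a.1.
Proof. by move=> fa; apply: cvg_comp fa cvg_fst. Qed.

Lemma cvg_snd_comp {A B : topologicalType} {T} {F : set_system T}
    {f : T -> A * B} {a : A * B} :
  f @ F --> a -> (fun t => (f t).2) @ F --> a.2.
Proof. by move=> fa; apply: cvg_comp fa cvg_snd. Qed.

Lemma cvg_pair_nbhs {A B : topologicalType} {T} {F : set_system T} {FF : Filter F}
    {f : T -> A} {g : T -> B} {a : A} {b : B} :
  f @ F --> a -> g @ F --> b -> (f t, g t) @[t --> F] --> (a, b).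
Proof. exact: cvg_pair. Qed.

Lemma cvgry_sub0 {T} {F : set_system T} {FF : Filter F} {f g : T -> R} :
  (f - g) @ F --> (0 : R) -> g @ F --> +oo -> f @ F --> +oo.
Proof.
move=> /cvgr0Pnorm_lt fg0 /cvgryPge gy; apply/cvgryPge => A.
near=> t; suff: A + 1 <= g t /\ `|f t - g t| < 1.
  by rewrite ltr_norml => -[] /[swap] /andP[]; lra.
by split; near: t; [exact: gy | exact: fg0].
Unshelve. all: by end_near.
Qed.

Lemma cvgr0_natSinv_lt {W : normedModType R} (d : nat -> W) :
  (\forall k \near \oo, `|d k| < k.+1%:R^-1) -> d @ \oo --> 0.
Proof.
move=> dk; apply/cvgr0Pnorm_lt => e e0; near=> k.
apply: (@lt_trans _ _ k.+1%:R^-1); first by near: k.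
by near: k; exact: (near_infty_natSinv_lt (PosNum e0)).
Unshelve. all: by end_near.
Qed.

(* The continuity premise sits under the filter so that approximants can be
   chosen uniformly in k, whether or not F is continuous at the k-th point. *)
Lemma near_continuous_lt {V W : normedModType R} (F : V -> W) (x : V) (e : R) :
  0 < e -> \forall v \near x, {for x, continuous F} -> `|F v - F x| < e.
Proof.
move=> e0; have [Fx|nFx] := pselect {for x, continuous F}; last first.
  by apply: nearW => v /nFx.
by near=> v => _; rewrite distrC; near: v; exact: ((cvgrPdist_lt _ _).1 Fx e e0).
Unshelve. all: by end_near.
Qed.

Lemma approx_in_closure {V W : normedModType R} {Q : set V} (G : set V)
    (F : V -> W) {p : nat -> V} :
  (forall k, closure Q (p k)) -> (forall k, nbhs (p k) G) ->
  (\forall k \near \oo, {for p k, continuous F}) ->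
  exists q : nat -> V, [/\ forall k, (Q `&` G) (q k),
    (fun k => q k - p k) @ \oo --> 0 & (fun k => F (q k) - F (p k)) @ \oo --> 0].
Proof.
move=> Qp Gp Fp.
have near_p k : \forall v \near p k, [/\ G v, `|v - p k| < k.+1%:R^-1 &
    {for p k, continuous F} -> `|F v - F (p k)| < k.+1%:R^-1].
  have k0 : 0 < k.+1%:R^-1 :> R by rewrite invr_gt0.
  near=> v; split; [near: v; exact: Gp | rewrite distrC; near: v |
    near: v; exact: near_continuous_lt].
  exact: (cvgrPdist_lt _ _).1 (@cvg_id _ (nbhs (p k))) _ k0.
have /choice[q qP] k : exists v, [/\ Q v, G v, `|v - p k| < k.+1%:R^-1 &
    {for p k, continuous F} -> `|F v - F (p k)| < k.+1%:R^-1].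
  by have [v [Qv [Gv vp Fv]]] := Qp k _ (near_p k); exists v.
exists q; split.
- by move=> k; have [] := qP k.
- by apply: cvgr0_natSinv_lt; apply: nearW => k; have [] := qP k.
- by apply: cvgr0_natSinv_lt; near=> k; have [_ _ _] := qP k; apply; near: k.
Unshelve. all: by end_near.
Qed.

End NormedSequences.

Section EuclideanNorm.
Context {R : realType} {k : nat}.
Implicit Types a : 'rV[R]_k.

Lemma enorm_eq0 a : (enorm a == 0) = (a == 0).
Proof.
have sqr_ge0 i : 0 <= a 0 i * a 0 i by rewrite -expr2 sqr_ge0.
rewrite /enorm sqrtr_eq0 /dotv le_eqVlt ltNge sumr_ge0 // orbF psumr_eq0 //.
apply/allP/eqP => [a0 | -> i _ /=]; last by rewrite mxE mulr0.
apply/rowP => i; rewrite mxE; apply/eqP.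
by have /= := a0 i (mem_index_enum i); rewrite mulf_eq0 orbb.
Qed.

Lemma enorm0 : enorm (0 : 'rV[R]_k) = 0.
Proof. by apply/eqP; rewrite enorm_eq0. Qed.

Lemma enorm_continuous : continuous (@enorm R k).
Proof.
move=> a; apply: (@continuous_comp _ _ _ (fun b => dotv b b)); last first.
  exact: sqrt_continuous.
apply: (@continuous_big R^o _ +%R 0 xpredT add_continuous _ (index_enum 'I_k)
  (fun i (b : 'rV[R]_k) => b 0 i * b 0 i)) => i _ b.
by apply: (@cvgM _ _ (nbhs b)); exact: coord_continuous.
Qed.

Lemma cvg_enorm {T} {F : set_system T} {f : T -> 'rV[R]_k} {a} :
  f @ F --> a -> (fun t => enorm (f t)) @ F --> enorm a.
Proof. by move=> fa; apply: cvg_comp fa (enorm_continuous a). Qed.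

End EuclideanNorm.

Section Coderivatives.
Variables (R : realType) (n m : nat) (Phi : 'rV[R]_n -> set 'rV[R]_m).
Local Notation X := 'rV[R]_n.
Local Notation Y := 'rV[R]_m.

Definition rcoder_graph : set (X * Y * X * Y) :=
  [set w | rcoder Phi w.1.1.1 w.1.1.2 w.2 w.1.2].

Lemma rcoder_sub_lcoder x y ys : rcoder Phi x y ys `<=` lcoder Phi x y ys.
Proof.
move=> xs xs_reg; exists (fun=> (x, y)), (fun=> (xs, - ys)).
by split=> //; exact: cvg_cst.
Qed.

Lemma lcoder_closure {x y ys xs} :
  lcoder Phi x y ys xs -> closure rcoder_graph (x, y, xs, ys).
Proof.
move=> [zk [etak [zeta_reg zk_xy etak_xs]]] B B_near.
pose w k := ((zk k).1, (zk k).2, (etak k).1, - (etak k).2).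
have w_cvg : w @ \oo --> (x, y, xs, ys).
  rewrite -[ys]opprK; apply: cvg_pair_nbhs.
    2: by apply: cvgN; exact: cvg_snd_comp etak_xs.
  apply: cvg_pair_nbhs; last exact: cvg_fst_comp etak_xs.
  by apply: cvg_pair_nbhs; [exact: cvg_fst_comp zk_xy | exact: cvg_snd_comp zk_xy].
have /filter_ex[k Bwk] : \forall k \near \oo, B (w k) := w_cvg B B_near.
exists (w k); split => //; rewrite /rcoder_graph /rcoder /= opprK.
by case: (zk k) (etak k) (zeta_reg k) => [? ?] [? ?].
Qed.

Variables (xb : X) (yb : Y).

Lemma asym_reg_sub (D D' : coderType R n m) :
  (forall x y ys, D x y ys `<=` D' x y ys) ->
  asym_reg D' Phi xb yb -> asym_reg D Phi xb yb.
Proof.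
move=> DD' H xk yk xsk lamk xs ? ? ? ? Dk.
by apply: (H xk yk xsk lamk xs) => // k; exact: DD' (Dk k).
Qed.

Lemma dir_asym_prop_sub (D D' : coderType R n m) u T :
  (forall x y ys, D x y ys `<=` D' x y ys) ->
  dir_asym_prop D' Phi xb yb u T -> dir_asym_prop D Phi xb yb u T.
Proof.
move=> DD' H xk yk xsk lamk xs ys ? ? ? Dk.
by apply: (H xk yk xsk lamk xs ys) => // k; exact: DD' (Dk k).
Qed.

Lemma asym_reg_lcoder :
  asym_reg (rcoder Phi) Phi xb yb -> asym_reg (lcoder Phi) Phi xb yb.
Proof.
move=> H xk yk xsk lamk xs _ xk_xb yk_yb xsk_xs Dk.
have [q [q_reg q_p _]] := approx_in_closure setT id
  (fun k => lcoder_closure (Dk k)) (fun k => filterT) (nearW _ (fun k => cvg_id)).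
apply: (H (fun k => (q k).1.1.1) (fun k => (q k).1.1.2) (fun k => (q k).1.2)
          (fun k => (q k).2)) => [k||||k]; first exact: (q_reg k).1.1.
- by apply: cvg_sub0 xk_xb; exact: cvg_fst_comp (cvg_fst_comp (cvg_fst_comp q_p)).
- by apply: cvg_sub0 yk_yb; exact: cvg_snd_comp (cvg_fst_comp (cvg_fst_comp q_p)).
- by apply: cvg_sub0 xsk_xs; exact: cvg_snd_comp (cvg_fst_comp q_p).
- exact: (q_reg k).1.
Qed.

Lemma open_off_fiber : closed (gph Phi) ->
  open [set w : X * Y * X * Y | ~ Phi w.1.1.1 yb /\ w.1.1.2 != yb].
Proof.
move=> cl; have proj_cvg (w : X * Y * X * Y) := @cvg_id _ (nbhs w).
apply: openI.
- rewrite -[S in open S]/(~` [set w : X * Y * X * Y | Phi w.1.1.1 yb]) openC.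
  apply: (continuous_closedP (fun w : X * Y * X * Y => (w.1.1.1, yb))).1 cl => w.
  apply: cvg_pair_nbhs (cvg_cst _).
  exact: cvg_fst_comp (cvg_fst_comp (cvg_fst_comp (proj_cvg w))).
- have neq_open : open [set y : Y | y != yb].
    rewrite (_ : [set y | y != yb] = ~` [set yb]) ?openC.
      exact/accessible_closed_set1/hausdorff_accessible/norm_hausdorff.
    by apply/seteqP; split => y /= /eqP.
  apply: (open_comp _ neq_open) => w _.
  exact: cvg_snd_comp (cvg_fst_comp (cvg_fst_comp (proj_cvg w))).
Qed.

Local Notation W := (X * Y * Y * R^o * Y)%type.

(* The sequences of (C) whose limits must survive the approximation, as a
   function of the tuple (x, y, x*, lam). *)
Definition dir_data (w : X * Y * X * Y) : W :=
  let x := w.1.1.1 in let y := w.1.1.2 in let lam := w.2 in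
  ((enorm (x - xb))^-1 *: (x - xb), (enorm (x - xb))^-1 *: (y - yb),
   (enorm (y - yb) / enorm (x - xb)) *: lam, enorm lam : R^o,
   (enorm (y - yb))^-1 *: (y - yb) - (enorm lam)^-1 *: lam).

Lemma dir_data_continuous (w : X * Y * X * Y) :
  w.1.1.1 != xb -> w.1.1.2 != yb -> w.2 != 0 -> {for w, continuous dir_data}.
Proof.
move=> wx wy wl; have w_cvg := @cvg_id _ (nbhs w).
have cx : (fun v => v.1.1.1 - xb) @ w --> w.1.1.1 - xb.
  exact: cvgB (cvg_fst_comp (cvg_fst_comp (cvg_fst_comp w_cvg))) (cvg_cst _).
have cy : (fun v => v.1.1.2 - yb) @ w --> w.1.1.2 - yb.
  exact: cvgB (cvg_snd_comp (cvg_fst_comp (cvg_fst_comp w_cvg))) (cvg_cst _).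
have cl : (fun v => v.2) @ w --> w.2 := cvg_snd_comp w_cvg.
have nx := cvg_enorm cx; have ny := cvg_enorm cy; have nl := cvg_enorm cl.
have ix : enorm (w.1.1.1 - xb) != 0 by rewrite enorm_eq0 subr_eq0.
have iy : enorm (w.1.1.2 - yb) != 0 by rewrite enorm_eq0 subr_eq0.
have il : enorm w.2 != 0 by rewrite enorm_eq0.
move: ix iy il => /cvgV/(_ nx) ix /cvgV/(_ ny) iy /cvgV/(_ nl) il.
apply: cvg_pair_nbhs; last exact: cvgB (cvgZ iy cy) (cvgZ il cl).
apply: cvg_pair_nbhs; last exact: nl.
apply: cvg_pair_nbhs; last exact: cvgZ (cvgM ny ix) cl.
exact: cvg_pair_nbhs (cvgZ ix cx) (cvgZ ix cy).
Qed.

Lemma dir_asym_prop_lcoder u T : closed (gph Phi) -> gph Phi (xb, yb) ->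
  dir_asym_prop (rcoder Phi) Phi xb yb u T ->
  dir_asym_prop (lcoder Phi) Phi xb yb u T.
Proof.
move=> cl gb H xk yk xsk lamk xs ys _ xk_off yk_ne Dk xk_xb yk_yb xsk_xs
  dx_u dy_0 lam_ys lam_oo dir_0.
pose p k := (xk k, yk k, xsk k, lamk k).
have p_cont : \forall k \near \oo, {for p k, continuous dir_data}.
  near=> k; apply: dir_data_continuous => /=; [|exact: yk_ne|].
  - by apply: contra_not_neq (xk_off k) => ->.
  - have : 0 < enorm (lamk k) by near: k; exact: (cvgryPgt _).1 lam_oo 0.
    by apply: contraTneq => ->; rewrite enorm0 ltxx.
have p_off k : nbhs (p k) [set w | ~ Phi w.1.1.1 yb /\ w.1.1.2 != yb].
  apply: open_nbhs_nbhs; split; first exact: open_off_fiber.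
  by split; [exact: xk_off | exact: yk_ne].
have [q [q_reg q_p dq_p]] :=
  approx_in_closure _ dir_data (fun k => lcoder_closure (Dk k)) p_off p_cont.
apply: (H (fun k => (q k).1.1.1) (fun k => (q k).1.1.2) (fun k => (q k).1.2)
          (fun k => (q k).2)) => [k|k|k|k||||||||].
- exact: (q_reg k).1.1.
- exact: (q_reg k).2.1.
- exact: (q_reg k).2.2.
- exact: (q_reg k).1.
- by apply: cvg_sub0 xk_xb; exact: cvg_fst_comp (cvg_fst_comp (cvg_fst_comp q_p)).
- by apply: cvg_sub0 yk_yb; exact: cvg_snd_comp (cvg_fst_comp (cvg_fst_comp q_p)).
- by apply: cvg_sub0 xsk_xs; exact: cvg_snd_comp (cvg_fst_comp q_p).
- apply: cvg_sub0 dx_u.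
  exact: cvg_fst_comp (cvg_fst_comp (cvg_fst_comp (cvg_fst_comp dq_p))).
- apply: cvg_sub0 dy_0.
  exact: cvg_snd_comp (cvg_fst_comp (cvg_fst_comp (cvg_fst_comp dq_p))).
- apply: cvg_sub0 lam_ys.
  exact: cvg_snd_comp (cvg_fst_comp (cvg_fst_comp dq_p)).
- by apply: cvgry_sub0 lam_oo; exact: cvg_snd_comp (cvg_fst_comp dq_p).
- by apply: cvg_sub0 dir_0; exact: cvg_snd_comp dq_p.
Unshelve. all: by end_near.
Qed.

End Coderivatives.

Theorem proposition5p2 (R : realType) (n m : nat)
  (Phi : 'rV[R]_n -> set 'rV[R]_m) (xb : 'rV[R]_n) (yb : 'rV[R]_m) (u : 'rV[R]_n) :
  closed (gph Phi) -> gph Phi (xb, yb) -> enorm u = 1 ->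
  [/\ asym_reg (rcoder Phi) Phi xb yb <-> asym_reg (lcoder Phi) Phi xb yb,
      dir_asym_reg (rcoder Phi) Phi xb yb u <-> dir_asym_reg (lcoder Phi) Phi xb yb u &
      strong_dir_asym_reg (rcoder Phi) Phi xb yb u <->
        strong_dir_asym_reg (lcoder Phi) Phi xb yb u].
Proof.
move=> cl gb _; have r_l := @rcoder_sub_lcoder R n m Phi.
split; split; [exact: asym_reg_lcoder | exact: asym_reg_sub r_l | | | |].
all: by [apply: dir_asym_prop_lcoder | apply: dir_asym_prop_sub r_l].
Qed.
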